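(* For every $k\in\mathbb{N}$, the limit $\tau_k^*:=\lim_{n\to\infty}\tau_{n,k}$ exists and $$\tau_k^*=\Gamma(\nu+1)\Big(\frac{j_{\nu+1,1}}{2}\Big)^{-\nu}\,|J_\nu(j_{\nu+1,1})|,\qquad \nu=k-\tfrac12,$$ where $J_\nu$ is the Bessel function of the first kind of order $\nu$ and $j_{\nu+1,1}$ is the first positive zero of $J_{\nu+1}$.
   Context: $T_n$ denotes the Chebyshev polynomial of the first kind of degree $n$, $T_n(\cos\theta)=\cos n\theta$. For integers $n\ge k+2$, $k\ge 1$, let $\omega_{n,k}$ be the rightmost (largest) zero of $T_n^{(k+1)}$ and define $\tau_{n,k}:=|T_n^{(k)}(\omega_{n,k})|/T_n^{(k)}(1)$. *)

From Stdlib Require Import Reals Arith Factorial.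
From Coquelicot Require Import Coquelicot.
Open Scope R_scope.

(* Chebyshev polynomials of the first kind, as real functions:
   T_0 = 1, T_1 = x, T_{n+2} = 2 x T_{n+1} - T_n  (so T_n(cos t) = cos (n t)). *)
Fixpoint cheb_pair (n : nat) (x : R) : R * R :=
  match n with
  | O => (1, x)
  | S m => let (a, b) := cheb_pair m x in (b, 2 * x * b - a)
  end.
Definition ChebT (n : nat) (x : R) : R := fst (cheb_pair n x).

(* omega_{n,k} : the largest zero of T_n^{(k+1)} (supremum of its finite zero set). *)
Definition cheb_omega (n k : nat) : R :=
  real (Lub_Rbar (fun x => Derive_n (ChebT n) (S k) x = 0)).

Definition cheb_tau (n k : nat) : R :=
  Rabs (Derive_n (ChebT n) k (cheb_omega n k)) / Derive_n (ChebT n) k 1.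

Definition Gamma (x : R) : R :=
  RInt_gen (fun t => Rpower t (x - 1) * exp (- t)) (at_right 0) (Rbar_locally p_infty).

Definition BesselJ (nu x : R) : R :=
  Series (fun m => (-1) ^ m / (INR (Factorial.fact m) * Gamma (INR m + nu + 1))
                   * Rpower (x / 2) (2 * INR m + nu)).

Definition first_pos_zero (f : R -> R) (j : R) : Prop :=
  0 < j /\ f j = 0 /\ (forall x, 0 < x < j -> f x <> 0).

From Stdlib Require Import Reals Lra Lia Arith Classical.
From Coquelicot Require Import Coquelicot.
Open Scope R_scope.

(* Put [b = k + 1/2] and [phi b s = sum_m (-s)^m / (m! (b)_m)]. Then
   [J_nu (x) = (x/2)^nu / Gamma b * phi b ((x/2)^2)] and
   [J_(nu+1) (x) = - (x/2)^(nu+1) / Gamma b * phi' b ((x/2)^2)], so [j_(nu+1,1) = 2 sqrt s0] for the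
   first positive zero [s0] of [phi' b], and the claimed limit is [|phi b s0|].
   In the variable [s = n^2 (1 - x) / 2], [T_n^(k)(x) / T_n^(k)(1)] is a polynomial [G_n s] whose
   coefficients tend to those of [phi b] and are dominated by them (Tannery), so [G_n -> phi b] and
   [G_n' -> phi' b] uniformly on compacts. As [G_n' < 0] on [(-oo, 0]] and [phi' b] changes sign at
   [s0], the largest zero [omega_(n,k)] of [T_n^(k+1)] corresponds to the smallest zero of [G_n'],
   which tends to [s0]; hence [tau_(n,k) = |G_n (s omega_(n,k))| -> |phi b s0|].
   That [phi' b] has a positive zero at all follows from [s phi'' + b phi' + phi = 0]: if [phi' b < 0]
   on [(0, +oo)], then either [phi b s1 < 0] for some [s1] and [(s phi')' >= - phi b s1 > 0] beyond
   [s1], or [phi b] stays positive and integrating [(s^(k+1) phi')' = s^k (phi'/2 - phi)] bounds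
   [- phi' b] below by a positive constant; both contradict the sign assumptions. *)

Lemma is_derive_MVT (f df : R -> R) a b : a < b ->
  (forall x, a <= x <= b -> is_derive f x (df x)) ->
  exists c, a < c < b /\ f b - f a = df c * (b - a).
Proof.
  intros Hab Hd. destruct (MVT_cor2 f df a b Hab) as [c [Hc ?]]; [|now exists c].
  intros x Hx. apply is_derive_Reals. auto.
Qed.

Lemma is_derive_Rmult (f g : R -> R) x df dg : is_derive f x df -> is_derive g x dg ->
  is_derive (fun t => f t * g t) x (df * g x + f x * dg).
Proof. intros Hf Hg. apply (is_derive_mult f g x df dg Hf Hg). intros; apply Rmult_comm. Qed.

Lemma is_derive_pow_id (n : nat) x : is_derive (fun t => t ^ n) x (INR n * x ^ pred n).
Proof. generalize (is_derive_pow _ n x 1 (is_derive_id x)). now rewrite Rmult_1_r. Qed.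

Lemma is_derive_eq (f : R -> R) (x l l' : R) : is_derive f x l -> l = l' -> is_derive f x l'.
Proof. now intros H <-. Qed.

Lemma continuity_pt_ball (f : R -> R) x : continuity_pt f x -> forall eps, 0 < eps ->
  exists d, 0 < d /\ forall y, Rabs (y - x) < d -> Rabs (f y - f x) < eps.
Proof.
  intros H eps Heps. destruct (H eps Heps) as [d [Hd H']]. exists d. split; auto.
  intros y Hy. destruct (Req_dec y x) as [->|Hne].
  - now rewrite Rminus_diag, Rabs_R0.
  - apply (H' y). repeat split; auto.
Qed.

Lemma continuity_first_pos_root (f : R -> R) z : continuity f -> f 0 < 0 -> 0 < z -> f z = 0 ->
  exists s0, 0 < s0 /\ f s0 = 0 /\ forall s, 0 <= s < s0 -> f s < 0.
Proof.
  intros Hf H0 Hz Hfz.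
  set (E := fun t => 0 <= t /\ forall s, 0 <= s <= t -> f s < 0).
  assert (HE0 : E 0) by (split; [lra|intros s Hs; now replace s with 0 by lra]).
  assert (Hbd : bound E).
  { exists z. intros t [Ht Hs]. destruct (Rle_lt_dec t z); auto. specialize (Hs z). lra. }
  destruct (completeness E Hbd (ex_intro _ 0 HE0)) as [m [Hub Hlub]].
  assert (Happrox : forall e, 0 < e -> exists t, E t /\ m - e < t <= m).
  { intros e He. apply NNPP. intros Hn. enough (m <= m - e) by lra. apply Hlub. intros t Ht.
    destruct (Rle_lt_dec t (m - e)) as [|Hl]; auto. exfalso. apply Hn. exists t.
    split; [exact Ht|]. split; [lra|now apply Hub]. }
  assert (Hbelow : forall s, 0 <= s < m -> f s < 0).
  { intros s Hs. destruct (Happrox (m - s)) as [t [[_ Ht] ?]]; [lra|]. apply Ht. lra. }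
  assert (Hm0 : 0 <= m) by now apply Hub.
  destruct (Req_dec (f m) 0) as [Hfm|Hfm].
  { exists m. repeat split; auto. destruct Hm0 as [|<-]; [easy|lra]. }
  exfalso. destruct (continuity_pt_ball f m (Hf m) (Rabs (f m) / 2)) as [d [Hd Hdd]].
  { apply Rabs_pos_lt in Hfm. lra. }
  destruct (Rlt_dec (f m) 0) as [Hneg|Hpos].
  - enough (m + d / 2 <= m) by lra. apply Hub. split; [lra|]. intros s Hs.
    destruct (Rlt_le_dec s m); [apply Hbelow; lra|].
    specialize (Hdd s (proj2 (Rabs_lt_between' s m d) ltac:(split; lra))).
    rewrite (Rabs_left (f m)) in Hdd by auto. apply Rabs_lt_between' in Hdd. lra.
  - destruct (Happrox d Hd) as [t [[? Ht] ?]]. specialize (Ht t ltac:(lra)).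
    specialize (Hdd t (proj2 (Rabs_lt_between' t m d) ltac:(split; lra))).
    rewrite (Rabs_right (f m)) in Hdd by lra. apply Rabs_lt_between' in Hdd. lra.
Qed.

(** * Power series *)

Lemma sum_f_R0_mono (u : nat -> R) K n : (forall m, 0 <= u m) -> (K <= n)%nat ->
  sum_f_R0 u K <= sum_f_R0 u n.
Proof. intros Hu Hn. induction Hn as [|n _ IH]; simpl; [lra|]. specialize (Hu (S n)). lra. Qed.

Lemma term_le_sum_f_R0 (u : nat -> R) N n : (forall m, 0 <= u m) -> (n <= N)%nat ->
  u n <= sum_f_R0 u N.
Proof.
  intros Hu Hn. apply Rle_trans with (sum_f_R0 u n); [|now apply sum_f_R0_mono].
  destruct n as [|n]; simpl; [lra|]. pose proof (cond_pos_sum u n Hu). lra.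
Qed.

Lemma is_series_sum_f_R0 (u : nat -> R) (l : R) :
  is_series u l <-> is_lim_seq (fun N => sum_f_R0 u N) l.
Proof.
  split; intros H; [apply (is_lim_seq_ext (sum_n u))|apply (is_lim_seq_ext _ (sum_n u)) in H];
    auto; intros; now rewrite sum_n_Reals.
Qed.

Lemma sum_f_R0_const_after (u : nat -> R) N n :
  (forall m, (N < m)%nat -> u m = 0) -> (N <= n)%nat -> sum_f_R0 u n = sum_f_R0 u N.
Proof. intros Hu Hn. induction Hn as [|n Hn IH]; simpl; [easy|]. rewrite IH, Hu by lia. ring. Qed.

Lemma is_series_finite_support (u : nat -> R) N :
  (forall m, (N < m)%nat -> u m = 0) -> is_series u (sum_f_R0 u N).
Proof.
  intros Hu. apply is_series_sum_f_R0, (is_lim_seq_ext_loc (fun _ => sum_f_R0 u N)).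
  - exists N. intros n Hn. symmetry. now apply sum_f_R0_const_after.
  - apply is_lim_seq_const.
Qed.

Lemma PSeries_finite_support (a : nat -> R) N x :
  (forall m, (N < m)%nat -> a m = 0) -> PSeries a x = sum_f_R0 (fun m => a m * x ^ m) N.
Proof.
  intros Ha. apply is_series_unique, (is_series_finite_support (fun m => a m * x ^ m)).
  intros m Hm. rewrite Ha by easy. ring.
Qed.

Lemma CV_radius_finite_support (a : nat -> R) N :
  (forall m, (N < m)%nat -> a m = 0) -> CV_radius a = p_infty.
Proof.
  intros Ha. destruct (CV_radius_bounded a) as [Hub _].
  assert (Hbd : forall r, exists M, forall n, Rabs (a n * r ^ n) <= M).
  { intros r. exists (sum_f_R0 (fun m => Rabs (a m * r ^ m)) N). intros n.
    destruct (le_lt_dec n N).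
    - apply (term_le_sum_f_R0 (fun m => Rabs (a m * r ^ m))); auto using Rabs_pos.
    - rewrite Ha, Rmult_0_l, Rabs_R0 by auto. apply cond_pos_sum. intros; apply Rabs_pos. }
  destruct (CV_radius a) as [r| |]; [exfalso| easy |exfalso].
  - specialize (Hub (r + 1) (Hbd _)). simpl in Hub. lra.
  - exact (Hub 0 (Hbd 0)).
Qed.

Lemma ex_pseries_CV_radius_infty (a : nat -> R) x : CV_radius a = p_infty -> ex_pseries a x.
Proof. intros H. apply CV_radius_inside. now rewrite H. Qed.

Lemma ex_pseries_ex_series (a : nat -> R) x : ex_pseries a x -> ex_series (fun m => a m * x ^ m).
Proof.
  apply ex_series_ext. intros m. rewrite pow_n_pow. unfold scal; simpl. unfold mult; simpl. ring.
Qed.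

Lemma Series_nonpos (v : nat -> R) : ex_series v -> (forall m, v m <= 0) -> Series v <= 0.
Proof.
  intros Hex Hv.
  assert (H : Series (fun _ => 0) <= Series (fun m => -1 * v m)).
  { apply Series_le; [intros m; specialize (Hv m); lra|].
    now apply (@ex_series_scal_l R_AbsRing R_NormedModule (-1) v). }
  rewrite Series_scal_l, (is_series_unique _ _ (is_series_finite_support (fun _ => 0) 0 (fun _ _ => eq_refl)))
    in H. simpl in H. lra.
Qed.

Lemma series_tail_small (v : nat -> R) : (forall m, 0 <= v m) -> ex_series v ->
  forall eps, 0 < eps -> exists M, forall K, (M <= K)%nat -> sum_f_R0 v K - sum_f_R0 v M <= eps.
Proof.
  intros Hv [L HL] eps Heps. apply is_series_sum_f_R0 in HL.
  destruct (proj2 (is_lim_seq_spec _ _) HL (mkposreal eps Heps)) as [M HM].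
  exists M. intros K HK. specialize (HM M (le_n _)). simpl in HM.
  assert (sum_f_R0 v K <= L).
  { refine (is_lim_seq_le_loc (fun _ => sum_f_R0 v K) _ _ _ _ (is_lim_seq_const _) HL).
    exists K. intros n Hn. now apply sum_f_R0_mono. }
  apply Rabs_lt_between in HM. lra.
Qed.

Lemma is_lim_seq_sum_f_R0 (w : nat -> nat -> R) (l : nat -> R) M :
  (forall m, is_lim_seq (fun n => w n m) (l m)) ->
  is_lim_seq (fun n => sum_f_R0 (w n) M) (sum_f_R0 l M).
Proof. intros Hw. induction M; simpl; [apply Hw|]. now apply is_lim_seq_plus'. Qed.

Lemma is_lim_seq_sum_Rabs_diff (a : nat -> nat -> R) (l : nat -> R) r M :
  (forall m, is_lim_seq (fun n => a n m) (l m)) ->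
  is_lim_seq (fun n => sum_f_R0 (fun m => Rabs (a n m - l m) * r ^ m) M) 0.
Proof.
  intros Hlim. replace (Finite 0) with (Finite (sum_f_R0 (fun _ => 0) M)) by (rewrite sum_cte; f_equal; ring).
  apply is_lim_seq_sum_f_R0. intros m.
  replace (Finite 0) with (Rbar_mult (Rbar_abs (l m - l m)) (r ^ m))
    by (simpl; f_equal; rewrite Rminus_diag, Rabs_R0; ring).
  apply is_lim_seq_scal_r, is_lim_seq_abs, is_lim_seq_minus'; [apply Hlim|apply is_lim_seq_const].
Qed.

Lemma pow_Rabs_le (s r : R) m : Rabs s <= r -> Rabs (s ^ m) <= r ^ m.
Proof. intros H. rewrite <- RPow_abs. apply pow_incr. split; [apply Rabs_pos|exact H]. Qed.

Lemma PSeries_dominated_is_lim (b A : nat -> R) r s :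
  (forall m, Rabs (b m) <= A m) -> ex_series (fun m => A m * r ^ m) -> Rabs s <= r ->
  is_lim_seq (fun K => sum_f_R0 (fun m => b m * s ^ m) K) (PSeries b s).
Proof.
  intros Hb HA Hs. apply is_series_sum_f_R0, Series_correct, ex_series_Rabs.
  refine (@ex_series_le R_AbsRing R_CompleteNormedModule _ _ _ HA).
  intros m. unfold norm; simpl. unfold abs; simpl. rewrite Rabs_Rabsolu, Rabs_mult.
  apply Rmult_le_compat; auto using Rabs_pos, pow_Rabs_le.
Qed.

Lemma PSeries_tannery (a : nat -> nat -> R) (l A : nat -> R) (r : R) :
  0 <= r -> (forall m, is_lim_seq (fun n => a n m) (l m)) ->
  (forall n m, Rabs (a n m) <= A m) -> ex_series (fun m => A m * r ^ m) ->
  forall eps, 0 < eps -> exists N, forall n, (N <= n)%nat -> forall s, Rabs s <= r ->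
    Rabs (PSeries (a n) s - PSeries l s) <= eps.
Proof.
  intros Hr Hlim HA Hser eps Heps.
  assert (HlA : forall m, Rabs (l m) <= A m).
  { intros m. exact (is_lim_seq_le _ _ _ _ (fun n => HA n m)
      (is_lim_seq_abs _ _ (Hlim m)) (is_lim_seq_const (A m))). }
  assert (Hv : forall m, 0 <= A m * r ^ m).
  { intros m. apply Rmult_le_pos; [apply (Rle_trans _ _ _ (Rabs_pos _) (HlA m))|now apply pow_le]. }
  destruct (series_tail_small _ Hv Hser (eps / 4)) as [M HM]; [lra|].
  pose proof (is_lim_seq_sum_Rabs_diff a l r M Hlim) as Hw.
  destruct (proj2 (is_lim_seq_spec _ _) Hw (mkposreal (eps / 2) ltac:(lra))) as [N HN].
  exists N. intros n Hn s Hs. specialize (HN n Hn). simpl in HN.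
  rewrite Rminus_0_r, Rabs_pos_eq in HN
    by (apply cond_pos_sum; intros; apply Rmult_le_pos; [apply Rabs_pos|now apply pow_le]).
  refine (is_lim_seq_le_loc _ (fun _ => eps) _ eps _
    (is_lim_seq_abs _ _ (is_lim_seq_minus' _ _ _ _ (PSeries_dominated_is_lim _ _ _ _ (HA n) Hser Hs)
       (PSeries_dominated_is_lim _ _ _ _ HlA Hser Hs))) (is_lim_seq_const _)).
  exists (S M). intros K HK. specialize (HM K ltac:(lia)).
  rewrite <- minus_sum. eapply Rle_trans; [apply sum_f_R0_triangle|].
  rewrite (tech2 _ M K) in HM by lia. rewrite (tech2 _ M K) by lia.
  (* the first [M] terms are small by [HN], the remaining ones by [2 A m r^m] and [HM] *)
  apply Rle_trans with (sum_f_R0 (fun m => Rabs (a n m - l m) * r ^ m) M +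
                        sum_f_R0 (fun i => A (S M + i)%nat * r ^ (S M + i) * 2) (K - S M));
    [apply Rplus_le_compat; apply sum_Rle; intros m _|rewrite <- scal_sum; lra].
  - rewrite <- Rmult_minus_distr_r, Rabs_mult.
    apply Rmult_le_compat_l; [apply Rabs_pos|now apply pow_Rabs_le].
  - set (j := (S M + m)%nat). rewrite <- Rmult_minus_distr_r, Rabs_mult.
    assert (Rabs (a n j - l j) <= 2 * A j).
    { unfold Rminus. eapply Rle_trans; [apply Rabs_triang|]. rewrite Rabs_Ropp.
      specialize (HA n j). specialize (HlA j). lra. }
    pose proof (pow_Rabs_le s r j Hs). pose proof (Rabs_pos (a n j - l j)).
    pose proof (Rabs_pos (s ^ j)). nra.
Qed.

(** * The entire function [phi b s = sum_m (-s)^m / (m! (b)_m)] *)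

Fixpoint pochhammer (x : R) (m : nat) : R :=
  match m with O => 1 | S p => pochhammer x p * (x + INR p) end.

Lemma pochhammer_pos x m : 0 < x -> 0 < pochhammer x m.
Proof. intros Hx. induction m; simpl; [lra|]. pose proof (pos_INR m). nra. Qed.

Lemma pochhammer_add x j m : pochhammer x (j + m) = pochhammer x j * pochhammer (x + INR j) m.
Proof.
  induction m as [|m IH]; simpl; [rewrite Nat.add_0_r; ring|].
  rewrite Nat.add_succ_r. simpl. rewrite IH, plus_INR. ring.
Qed.

Definition phi_coef (b : R) (m : nat) : R := (-1) ^ m / (INR (fact m) * pochhammer b m).

Lemma phi_coef_S b m : 0 < b ->
  phi_coef b (S m) = - phi_coef b m / ((b + INR m) * INR (S m)).
Proof.
  intros Hb. unfold phi_coef. change (fact (S m)) with (S m * fact m)%nat. rewrite mult_INR.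
  simpl pochhammer. pose proof (INR_fact_lt_0 m). pose proof (pochhammer_pos b m Hb).
  pose proof (pos_INR m). rewrite S_INR. simpl pow. field. repeat split; lra.
Qed.

Lemma phi_coef_neq0 b m : 0 < b -> phi_coef b m <> 0.
Proof.
  intros Hb. unfold phi_coef. pose proof (INR_fact_lt_0 m). pose proof (pochhammer_pos b m Hb).
  apply Rmult_integral_contrapositive. split; [apply pow_nonzero; lra|].
  apply Rinv_neq_0_compat. nra.
Qed.

Lemma CV_radius_phi_coef b : 0 < b -> CV_radius (phi_coef b) = p_infty.
Proof.
  intros Hb. apply CV_radius_infinite_DAlembert; [intros; now apply phi_coef_neq0|].
  apply (is_lim_seq_le_le (fun _ => 0) _ (fun n => / b * / INR (S n))); [|apply is_lim_seq_const|].
  - intros n. pose proof (pos_INR n). pose proof (lt_0_INR (S n) ltac:(lia)).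
    pose proof (phi_coef_neq0 b n Hb). rewrite phi_coef_S by auto.
    replace (- phi_coef b n / ((b + INR n) * INR (S n)) / phi_coef b n)
      with (- / ((b + INR n) * INR (S n))) by (field; lra).
    rewrite Rabs_Ropp, Rabs_pos_eq by (left; apply Rinv_0_lt_compat; nra).
    split; [left; apply Rinv_0_lt_compat; nra|].
    rewrite <- Rinv_mult. apply Rinv_le_contravar; nra.
  - replace (Finite 0) with (Rbar_mult (/ b) 0) by (simpl; f_equal; ring).
    apply is_lim_seq_scal_l, (is_lim_seq_inv (fun n => INR (S n)) p_infty); [|discriminate].
    apply (is_lim_seq_incr_1 INR), is_lim_seq_INR.
Qed.

Definition phi (b s : R) : R := PSeries (phi_coef b) s.
Definition dphi (b s : R) : R := PSeries (PS_derive (phi_coef b)) s.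
Definition d2phi (b s : R) : R := PSeries (PS_derive (PS_derive (phi_coef b))) s.

Section Phi.

Variable b : R.
Hypothesis b_pos : 0 < b.

Let CV_radius_dphi_coef : CV_radius (PS_derive (phi_coef b)) = p_infty.
Proof. now rewrite CV_radius_derive, CV_radius_phi_coef. Qed.

Let CV_radius_d2phi_coef : CV_radius (PS_derive (PS_derive (phi_coef b))) = p_infty.
Proof. now rewrite !CV_radius_derive, CV_radius_phi_coef. Qed.

Lemma is_derive_phi s : is_derive (phi b) s (dphi b s).
Proof. apply is_derive_PSeries. now rewrite CV_radius_phi_coef. Qed.

Lemma is_derive_dphi s : is_derive (dphi b) s (d2phi b s).
Proof. apply is_derive_PSeries. now rewrite CV_radius_dphi_coef. Qed.

Lemma continuity_phi : continuity (phi b).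
Proof. intros s. apply PSeries_continuity. now rewrite CV_radius_phi_coef. Qed.

Lemma continuity_dphi : continuity (dphi b).
Proof. intros s. apply PSeries_continuity. now rewrite CV_radius_dphi_coef. Qed.

Lemma continuity_d2phi : continuity (d2phi b).
Proof. intros s. apply PSeries_continuity. now rewrite CV_radius_d2phi_coef. Qed.

Lemma dphi_0 : dphi b 0 = - / b.
Proof.
  unfold dphi. rewrite PSeries_0. unfold PS_derive. rewrite phi_coef_S by auto.
  unfold phi_coef. simpl. field. lra.
Qed.

Lemma dphi_0_neg : dphi b 0 < 0.
Proof. rewrite dphi_0. apply Ropp_lt_gt_0_contravar, Rinv_0_lt_compat, b_pos. Qed.

Lemma phi_ode s : s * d2phi b s + b * dphi b s + phi b s = 0.
Proof.
  unfold phi, dphi, d2phi.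
  rewrite <- PSeries_incr_1, <- PSeries_scal, <- PSeries_plus, <- PSeries_plus.
  - rewrite <- (PSeries_const_0 s). apply PSeries_ext.
    intros [|p]; unfold PS_plus, PS_scal, PS_incr_1, PS_derive, scal, plus, mult;
      cbn -[phi_coef INR]; rewrite !phi_coef_S by auto; rewrite ?S_INR; simpl.
    + field. lra.
    + pose proof (pos_INR p). field. repeat split; lra.
  - apply CV_radius_inside. eapply Rbar_lt_le_trans; [|apply CV_radius_plus].
    rewrite CV_radius_incr_1, CV_radius_scal, CV_radius_d2phi_coef, CV_radius_dphi_coef;
      [easy|lra].
  - now apply ex_pseries_CV_radius_infty, CV_radius_phi_coef.
  - apply ex_pseries_CV_radius_infty. now rewrite CV_radius_incr_1.
  - apply ex_pseries_CV_radius_infty. rewrite CV_radius_scal; [easy|lra].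
Qed.

Lemma phi_decreasing a c : a < c -> (forall x, a < x < c -> dphi b x < 0) -> phi b c < phi b a.
Proof.
  intros Hac H. destruct (is_derive_MVT (phi b) (dphi b) a c Hac) as [x [Hx E]].
  - intros x _. apply is_derive_phi.
  - specialize (H x Hx). nra.
Qed.

Lemma dphi_pos_right_of_root s0 : 0 < s0 -> dphi b s0 = 0 -> phi b s0 < 0 ->
  exists d, 0 < d /\ forall s, s0 < s <= s0 + d -> 0 < dphi b s.
Proof.
  intros Hs0 Hz Hphi.
  assert (Hd2 : 0 < d2phi b s0) by (pose proof (phi_ode s0); rewrite Hz in *; nra).
  destruct (continuity_pt_ball (d2phi b) s0 (continuity_d2phi s0) (d2phi b s0 / 2))
    as [d [Hd Hdd]]; [lra|].
  exists (d / 2). split; [lra|]. intros s Hs.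
  destruct (is_derive_MVT (dphi b) (d2phi b) s0 s) as [x [Hx E]]; [lra|intros; apply is_derive_dphi|].
  specialize (Hdd x (proj2 (Rabs_lt_between' x s0 d) ltac:(split; lra))).
  apply Rabs_lt_between' in Hdd. nra.
Qed.

End Phi.

(** * The first positive zero of [dphi (k + 1/2)] *)

Section FirstCriticalPoint.

Variable k : nat.
Hypothesis k_pos : (1 <= k)%nat.

Let b := INR k + / 2.

Let b_ge1 : 1 <= b.
Proof. unfold b. apply (le_INR 1) in k_pos. simpl in k_pos. lra. Qed.

Let b_pos : 0 < b.
Proof. pose proof b_ge1. lra. Qed.

Lemma is_derive_pow_S_mul_dphi t :
  is_derive (fun t => t ^ S k * dphi b t) t (t ^ k * (dphi b t / 2 - phi b t)).
Proof.
  eapply is_derive_eq; [apply is_derive_Rmult; [apply is_derive_pow_id|now apply is_derive_dphi]|].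
  pose proof (phi_ode b b_pos t). simpl pred. rewrite S_INR. unfold b in *.
  replace (t ^ S k) with (t * t ^ k) by (simpl; ring). nra.
Qed.

Section NoCriticalPoint.

Hypothesis no_root : forall s, 0 < s -> dphi b s <> 0.

Lemma dphi_neg_of_no_root s : 0 <= s -> dphi b s < 0.
Proof.
  intros Hs. pose proof (dphi_0_neg b b_pos).
  destruct (Req_dec s 0) as [->|Hs0]; [easy|].
  destruct (Rtotal_order (dphi b s) 0) as [|[He|Hg]]; [easy|now apply no_root in He; lra|].
  destruct (IVT (dphi b) 0 s (continuity_dphi b b_pos)) as [z [Hz Hz0]]; [lra|easy|easy|].
  exfalso. apply (no_root z); [|easy]. destruct Hz as [[|<-] _]; [easy|lra].
Qed.

(* if [phi s < 0], then [(t dphi)' = (1 - b) dphi - phi >= - phi s > 0] beyond [s], so [t dphi t]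
   eventually becomes positive *)
Lemma phi_nonneg_of_no_root s : 0 < s -> 0 <= phi b s.
Proof.
  intros Hs. apply Rnot_lt_le. intros Hneg. set (c := - phi b s).
  assert (Hd : forall x, s <= x -> is_derive (fun t => t * dphi b t) x ((1 - b) * dphi b x - phi b x)).
  { intros x Hx. eapply is_derive_eq; [apply is_derive_Rmult; [apply is_derive_id|now apply is_derive_dphi]|].
    pose proof (phi_ode b b_pos x). change (@one R_AbsRing) with 1. lra. }
  set (T := s + (Rabs (s * dphi b s) + 1) / c).
  assert (HT : s < T).
  { unfold T. enough (0 < (Rabs (s * dphi b s) + 1) / c) by lra.
    apply Rdiv_lt_0_compat; [pose proof (Rabs_pos (s * dphi b s))|unfold c]; lra. }
  destruct (is_derive_MVT _ _ s T HT (fun x Hx => Hd x (proj1 Hx))) as [x [Hx E]].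
  assert (Hslope : c <= (1 - b) * dphi b x - phi b x).
  { pose proof (dphi_neg_of_no_root x ltac:(lra)).
    assert (phi b x < phi b s) by (apply phi_decreasing; [easy|lra|]; intros; apply dphi_neg_of_no_root; lra).
    unfold c. nra. }
  assert (Hgrow : Rabs (s * dphi b s) + 1 <= T * dphi b T - s * dphi b s).
  { rewrite E. replace (Rabs (s * dphi b s) + 1) with (c * (T - s)) by (unfold T, c; field; lra). nra. }
  pose proof (dphi_neg_of_no_root T ltac:(lra)). pose proof (dphi_neg_of_no_root s ltac:(lra)).
  rewrite Rabs_left in Hgrow by nra. nra.
Qed.

Lemma phi_pos_of_no_root s : 0 <= s -> 0 < phi b s.
Proof.
  intros Hs. pose proof (phi_nonneg_of_no_root (s + 1) ltac:(lra)).
  enough (phi b (s + 1) < phi b s) by lra.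
  apply phi_decreasing; [easy|lra|]. intros; apply dphi_neg_of_no_root; lra.
Qed.

Lemma dphi_le_neg_phi s : 0 < s -> dphi b s <= - phi b s / INR (S k).
Proof.
  intros Hs. pose proof (lt_0_INR (S k) ltac:(lia)) as Hk.
  set (g := fun t => t ^ S k * dphi b t + phi b s * t ^ S k / INR (S k)).
  assert (Hd : forall x, 0 <= x <= s -> is_derive g x (x ^ k * (dphi b x / 2 - phi b x + phi b s))).
  { intros x _. eapply is_derive_eq.
    { apply (is_derive_plus (fun t => t ^ S k * dphi b t) (fun t => phi b s * t ^ S k / INR (S k)));
        [apply is_derive_pow_S_mul_dphi|].
      apply (is_derive_ext (fun t => phi b s / INR (S k) * t ^ S k)).
      - intros t. change (phi b s / INR (S k) * t ^ S k = phi b s * t ^ S k / INR (S k)). field. lra.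
      - apply is_derive_scal, is_derive_pow_id. }
    simpl pred. change (plus ?u ?v) with (u + v). field. lra. }
  destruct (is_derive_MVT g _ 0 s Hs Hd) as [x [Hx E]].
  assert (phi b s < phi b x)
    by (apply phi_decreasing; [easy|lra|]; intros; apply dphi_neg_of_no_root; lra).
  pose proof (dphi_neg_of_no_root x ltac:(lra)). pose proof (pow_lt x k ltac:(lra)).
  assert (dphi b x / 2 - phi b x + phi b s < 0) by lra.
  assert (x ^ k * (dphi b x / 2 - phi b x + phi b s) < 0) by nra.
  assert (Hgs : g s < 0).
  { unfold g in E |- *. rewrite pow_i in E by lia.
    replace (0 * dphi b 0 + phi b s * 0 / INR (S k)) with 0 in E by (field; lra). nra. }
  unfold g in Hgs. pose proof (pow_lt s (S k) Hs).
  assert (s ^ S k * (dphi b s + phi b s / INR (S k)) < 0) by (unfold Rdiv in *; nra).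
  assert (dphi b s + phi b s / INR (S k) < 0) by nra. lra.
Qed.

Lemma dphi_decay_start : exists C, 0 < C /\ forall t, 1 <= t -> C / t ^ S k <= - dphi b t.
Proof.
  exists (- dphi b 1). split; [pose proof (dphi_neg_of_no_root 1 ltac:(lra)); lra|].
  intros t Ht. pose proof (pow_lt t (S k) ltac:(lra)).
  enough (t ^ S k * dphi b t <= dphi b 1).
  { apply Rmult_le_reg_r with (t ^ S k); [easy|]. field_simplify; lra. }
  destruct (Req_dec t 1) as [->|Ht1]; [rewrite pow1; lra|].
  destruct (is_derive_MVT _ _ 1 t ltac:(lra) (fun x _ => is_derive_pow_S_mul_dphi x)) as [x [Hx E]].
  pose proof (dphi_neg_of_no_root x ltac:(lra)). pose proof (phi_pos_of_no_root x ltac:(lra)).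
  pose proof (pow_lt x k ltac:(lra)).
  assert (x ^ k * (dphi b x / 2 - phi b x) < 0) by nra. rewrite pow1 in E. nra.
Qed.

(* integrating [- dphi >= C / t^(j+1)] over [[t, 2t]] gives [phi t >= C' / t^j], and
   [dphi_le_neg_phi] turns this back into a bound on [- dphi] *)
Lemma dphi_decay_step j :
  (exists C, 0 < C /\ forall t, 1 <= t -> C / t ^ S j <= - dphi b t) ->
  exists C, 0 < C /\ forall t, 1 <= t -> C / t ^ j <= - dphi b t.
Proof.
  intros [C [HC HCt]]. pose proof (lt_0_INR (S k) ltac:(lia)). pose proof (pow_lt 2 (S j) ltac:(lra)).
  exists (C / (INR (S k) * 2 ^ S j)). split; [apply Rdiv_lt_0_compat; nra|].
  intros t Ht. pose proof (pow_lt t j ltac:(lra)).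
  assert (Ht2 : (2 * t) ^ S j = 2 ^ S j * t ^ j * t) by (rewrite Rpow_mult_distr; simpl; ring).
  pose proof (pow_lt (2 * t) (S j) ltac:(lra)).
  destruct (is_derive_MVT (phi b) (dphi b) t (2 * t) ltac:(lra) (fun x _ => is_derive_phi b b_pos x))
    as [x [Hx E]].
  assert (HCx : C / (2 * t) ^ S j <= - dphi b x).
  { eapply Rle_trans; [|apply HCt; lra]. apply Rmult_le_compat_l; [lra|].
    apply Rinv_le_contravar; [apply pow_lt; lra|apply pow_incr; lra]. }
  pose proof (phi_pos_of_no_root (2 * t) ltac:(lra)).
  assert (Hphi : C / (2 ^ S j * t ^ j) <= phi b t).
  { replace (C / (2 ^ S j * t ^ j)) with (C / (2 * t) ^ S j * (2 * t - t)) by (rewrite Ht2; field; lra).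
    nra. }
  pose proof (dphi_le_neg_phi t ltac:(lra)).
  apply Rle_trans with (phi b t / INR (S k)); [|lra].
  replace (C / (INR (S k) * 2 ^ S j) / t ^ j) with (C / (2 ^ S j * t ^ j) / INR (S k)) by (field; lra).
  apply Rmult_le_compat_r; [left; apply Rinv_0_lt_compat|]; lra.
Qed.

Lemma dphi_bounded_away : exists C, 0 < C /\ forall t, 1 <= t -> C <= - dphi b t.
Proof.
  assert (Hdecay : forall j, (exists C, 0 < C /\ forall t, 1 <= t -> C / t ^ j <= - dphi b t) ->
    exists C, 0 < C /\ forall t, 1 <= t -> C / t ^ 0 <= - dphi b t).
  { induction j as [|j IH]; [easy|]. intros H. now apply IH, dphi_decay_step. }
  destruct (Hdecay _ dphi_decay_start) as [C [HC HCt]].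
  exists C. split; [easy|]. intros t Ht. specialize (HCt t Ht). simpl in HCt. lra.
Qed.

Lemma dphi_no_pos_root_absurd : False.
Proof.
  destruct dphi_bounded_away as [C [HC HCt]].
  pose proof (phi_pos_of_no_root 1 ltac:(lra)).
  set (T := 1 + (phi b 1 + 1) / C).
  assert (HT : 1 < T) by (unfold T; enough (0 < (phi b 1 + 1) / C) by lra; apply Rdiv_lt_0_compat; lra).
  destruct (is_derive_MVT (phi b) (dphi b) 1 T HT (fun x _ => is_derive_phi b b_pos x)) as [x [Hx E]].
  specialize (HCt x ltac:(lra)).
  assert (phi b T - phi b 1 <= - C * (T - 1)) by nra.
  replace (- C * (T - 1)) with (- (phi b 1 + 1)) in * by (unfold T; field; lra).
  pose proof (phi_pos_of_no_root T ltac:(lra)). lra.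
Qed.

End NoCriticalPoint.

Lemma dphi_has_pos_root : exists s, 0 < s /\ dphi b s = 0.
Proof.
  apply NNPP. intros Hno. apply dphi_no_pos_root_absurd. intros s Hs Hz. apply Hno. now exists s.
Qed.

Lemma dphi_first_pos_root :
  exists s0, 0 < s0 /\ dphi b s0 = 0 /\ forall s, 0 <= s < s0 -> dphi b s < 0.
Proof.
  destruct dphi_has_pos_root as [z [Hz Hz0]].
  exact (continuity_first_pos_root _ z (continuity_dphi b b_pos) (dphi_0_neg b b_pos) Hz Hz0).
Qed.

Lemma phi_at_first_pos_root_neg s0 : 0 < s0 -> dphi b s0 = 0 ->
  (forall s, 0 <= s < s0 -> dphi b s < 0) -> phi b s0 < 0.
Proof.
  intros Hs0 Hz Hneg. apply Rnot_le_lt. intros Hphi.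
  destruct (is_derive_MVT _ _ 0 s0 Hs0 (fun x _ => is_derive_pow_S_mul_dphi x)) as [x [Hx E]].
  assert (phi b s0 < phi b x) by (apply phi_decreasing; [easy|lra|]; intros; apply Hneg; lra).
  pose proof (Hneg x ltac:(lra)). pose proof (pow_lt x k ltac:(lra)).
  assert (x ^ k * (dphi b x / 2 - phi b x) < 0) by nra.
  rewrite Hz, pow_i in E by lia. nra.
Qed.

End FirstCriticalPoint.

(** * The Gamma function at half-integers *)

Definition gamma_integrand (x t : R) : R := Rpower t (x - 1) * exp (- t).

Lemma is_derive_Rpower_l y t : 0 < t -> is_derive (fun t => Rpower t y) t (y * Rpower t (y - 1)).
Proof. intros Ht. apply is_derive_Reals, derivable_pt_lim_power, Ht. Qed.

Lemma is_derive_exp_opp t : is_derive (fun t => exp (- t)) t (- exp (- t)).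
Proof. auto_derive; [easy|ring]. Qed.

Lemma continuous_gamma_integrand x t : 0 < t -> continuous (gamma_integrand x) t.
Proof.
  intros Ht. apply (@ex_derive_continuous R_AbsRing R_NormedModule). eexists.
  apply is_derive_Rmult; [now apply is_derive_Rpower_l|apply is_derive_exp_opp].
Qed.

Lemma ex_RInt_gamma_integrand x a b : 0 < a -> a <= b -> ex_RInt (gamma_integrand x) a b.
Proof.
  intros Ha Hab. apply (@ex_RInt_continuous R_CompleteNormedModule). intros z Hz.
  apply continuous_gamma_integrand. rewrite Rmin_left in Hz by lra. lra.
Qed.

Lemma gamma_integrand_pos x t : 0 < t -> 0 < gamma_integrand x t.
Proof. intros. unfold gamma_integrand, Rpower. apply Rmult_lt_0_compat; apply exp_pos. Qed.

Definition is_RInt_0_infty (f : R -> R) (l : R) : Prop :=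
  (forall a b, 0 < a -> a <= b -> ex_RInt f a b) /\
  forall eps, 0 < eps -> exists d M, 0 < d /\
    forall a b, 0 < a < d -> M < b -> Rabs (RInt f a b - l) < eps.

Lemma is_RInt_0_infty_is_RInt_gen f l :
  is_RInt_0_infty f l -> is_RInt_gen f (at_right 0) (Rbar_locally p_infty) l.
Proof.
  intros [Hex Hlim] P [e HP]. destruct (Hlim e (cond_pos e)) as [d [M [Hd HdM]]].
  assert (Hd1 : 0 < Rmin d 1) by (apply Rmin_glb_lt; lra).
  pose proof (Rmin_l d 1). pose proof (Rmin_r d 1). pose proof (Rmax_l M 1). pose proof (Rmax_r M 1).
  apply Filter_prod with (fun a => 0 < a < Rmin d 1) (fun b => Rmax M 1 < b).
  - exists (mkposreal _ Hd1). intros y Hy Hpos. split; [easy|].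
    change (Rabs (y - 0) < Rmin d 1) in Hy. apply Rabs_lt_between' in Hy. lra.
  - now exists (Rmax M 1).
  - intros a b Ha Hb. exists (RInt f a b). split.
    + apply (@RInt_correct R_CompleteNormedModule), Hex; lra.
    + apply HP. change (Rabs (RInt f a b - l) < e). apply HdM; lra.
Qed.

Lemma Gamma_is_RInt_0_infty x l : is_RInt_0_infty (gamma_integrand x) l -> Gamma x = l.
Proof. intros H. now apply is_RInt_gen_unique, is_RInt_0_infty_is_RInt_gen. Qed.

(* integration by parts *)
Lemma RInt_gamma_integrand_S x a b : 0 < a -> a <= b ->
  RInt (gamma_integrand (x + 1)) a b =
  x * RInt (gamma_integrand x) a b + (Rpower a x * exp (- a) - Rpower b x * exp (- b)).
Proof.
  intros Ha Hab. set (h := fun t => - (Rpower t x * exp (- t))).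
  replace (Rpower a x * exp (- a) - Rpower b x * exp (- b)) with (h b - h a) by (unfold h; ring).
  apply is_RInt_unique.
  apply (is_RInt_ext (fun t => plus (scal x (gamma_integrand x t))
                               (gamma_integrand (x + 1) t - x * gamma_integrand x t)));
    [intros; unfold plus, scal; simpl; unfold mult; simpl; ring|].
  apply (is_RInt_plus (fun t => scal x (gamma_integrand x t))
    (fun t => gamma_integrand (x + 1) t - x * gamma_integrand x t) a b _ (h b - h a)).
  - apply (@is_RInt_scal R_NormedModule), (@RInt_correct R_CompleteNormedModule).
    now apply ex_RInt_gamma_integrand.
  - apply (is_RInt_derive h); intros t Ht; rewrite Rmin_left, Rmax_right in Ht by lra.
    + unfold h. eapply is_derive_eq.
      { apply (is_derive_opp (fun t => Rpower t x * exp (- t))), is_derive_Rmult;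
          [apply is_derive_Rpower_l; lra|apply is_derive_exp_opp]. }
      unfold gamma_integrand. replace (x + 1 - 1) with x by ring. change (opp ?u) with (- u). ring.
    + apply (continuous_plus (fun t => gamma_integrand (x + 1) t) (fun t => opp (x * gamma_integrand x t))).
      * apply continuous_gamma_integrand. lra.
      * apply (continuous_opp (fun t => x * gamma_integrand x t)), (continuous_scal_r x (gamma_integrand x)).
        apply continuous_gamma_integrand. lra.
Qed.

Lemma exp_le_compat x y : x <= y -> exp x <= exp y.
Proof. intros [H| <-]; [left; now apply exp_increasing|lra]. Qed.

Lemma Rpower_exp_opp_le_near_0 x a : 1 <= x -> 0 < a <= 1 -> Rpower a x * exp (- a) <= a.
Proof.
  intros Hx Ha. assert (ln a <= 0) by (rewrite <- ln_1; apply ln_le; lra).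
  assert (Rpower a x <= a).
  { unfold Rpower. rewrite <- (exp_ln a) at 2 by lra. apply exp_le_compat. nra. }
  assert (exp (- a) <= 1) by (rewrite <- exp_0; apply exp_le_compat; lra).
  pose proof (exp_pos (- a)). unfold Rpower in *. pose proof (exp_pos (x * ln a)). nra.
Qed.

Lemma Rpower_exp_opp_le_near_infty x N b : x <= INR N -> 1 <= b ->
  Rpower b x * exp (- b) <= INR (fact (S N)) / b.
Proof.
  intros HxN Hb. assert (0 <= ln b) by (rewrite <- ln_1; apply ln_le; lra).
  assert (Hpow : Rpower b x <= b ^ N).
  { rewrite <- Rpower_pow by lra. unfold Rpower. apply exp_le_compat. nra. }
  assert (Hexp : b ^ S N / INR (fact (S N)) <= exp b).
  { eapply Rle_trans; [|apply (exp_ge_taylor b (S N)); lra].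
    apply (term_le_sum_f_R0 (fun j => b ^ j / INR (fact j))); [|lia].
    intros j. apply Rdiv_le_0_compat; [apply pow_le; lra|apply INR_fact_lt_0]. }
  pose proof (INR_fact_lt_0 (S N)). pose proof (pow_lt b N ltac:(lra)). pose proof (exp_pos b).
  rewrite exp_Ropp. apply Rle_trans with (b ^ N / exp b).
  - apply Rmult_le_compat_r; [left; apply Rinv_0_lt_compat|]; lra.
  - apply Rle_trans with (b ^ N / (b ^ S N / INR (fact (S N)))).
    + apply Rmult_le_compat_l; [lra|]. apply Rinv_le_contravar; [|easy].
      apply Rdiv_lt_0_compat; [apply pow_lt; lra|easy].
    + right. rewrite <- tech_pow_Rmult. field. repeat split; lra.
Qed.

Lemma is_RInt_0_infty_gamma_S x l : 1 <= x ->
  is_RInt_0_infty (gamma_integrand x) l -> is_RInt_0_infty (gamma_integrand (x + 1)) (x * l).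
Proof.
  intros Hx [Hex Hlim]. split; [intros; now apply ex_RInt_gamma_integrand|].
  intros eps Heps. destruct (INR_unbounded x) as [N HN].
  pose proof (INR_fact_lt_0 (S N)) as HF. set (K := 4 * INR (fact (S N)) / eps).
  destruct (Hlim (eps / (2 * x))) as [d [M [Hd HdM]]]; [apply Rdiv_lt_0_compat; lra|].
  exists (Rmin d (Rmin 1 (eps / 4))), (Rmax M (Rmax 1 K)).
  split; [repeat apply Rmin_glb_lt; lra|]. intros a b Ha Hb.
  pose proof (Rmin_l d (Rmin 1 (eps / 4))). pose proof (Rmin_r d (Rmin 1 (eps / 4))).
  pose proof (Rmin_l 1 (eps / 4)). pose proof (Rmin_r 1 (eps / 4)).
  pose proof (Rmax_l M (Rmax 1 K)). pose proof (Rmax_r M (Rmax 1 K)).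
  pose proof (Rmax_l 1 K). pose proof (Rmax_r 1 K).
  rewrite RInt_gamma_integrand_S by lra.
  specialize (HdM a b ltac:(lra) ltac:(lra)).
  pose proof (Rpower_exp_opp_le_near_0 x a Hx ltac:(lra)).
  pose proof (Rpower_exp_opp_le_near_infty x N b ltac:(lra) ltac:(lra)).
  assert (INR (fact (S N)) / b < eps / 4).
  { apply Rmult_lt_reg_r with (b * (4 / eps)); [apply Rmult_lt_0_compat; [lra|apply Rdiv_lt_0_compat; lra]|].
    unfold K in *. field_simplify; [|lra|lra]. unfold Rdiv in *. nra. }
  assert (Hmain : Rabs (x * (RInt (gamma_integrand x) a b - l)) < eps / 2).
  { rewrite Rabs_mult, Rabs_pos_eq by lra.
    replace (eps / 2) with (x * (eps / (2 * x))) by (field; lra). apply Rmult_lt_compat_l; lra. }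
  pose proof (Rmult_lt_0_compat _ _ (exp_pos (x * ln a)) (exp_pos (- a))).
  pose proof (Rmult_lt_0_compat _ _ (exp_pos (x * ln b)) (exp_pos (- b))).
  unfold Rpower in *. apply Rabs_lt_between in Hmain. apply Rabs_lt_between. lra.
Qed.

Lemma RInt_gamma_integrand_mono x a a' b' b : 0 < a -> a <= a' -> a' <= b' -> b' <= b ->
  RInt (gamma_integrand x) a' b' <= RInt (gamma_integrand x) a b.
Proof.
  intros Ha H1 H2 H3.
  assert (Hnonneg : forall u v, 0 < u -> u <= v -> 0 <= RInt (gamma_integrand x) u v).
  { intros u v Hu Huv. apply RInt_ge_0; [easy|now apply ex_RInt_gamma_integrand|].
    intros t Ht. left. apply gamma_integrand_pos. lra. }
  rewrite <- (@RInt_Chasles R_CompleteNormedModule _ a a' b),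
    <- (@RInt_Chasles R_CompleteNormedModule _ a' b' b);
    try (apply ex_RInt_gamma_integrand; lra).
  pose proof (Hnonneg a a' Ha H1). pose proof (Hnonneg b' b ltac:(lra) H3).
  change plus with Rplus. lra.
Qed.

(* [sqrt t <= 1 + t] and [-(2 + t) exp (-t)] is a primitive of [(1 + t) exp (-t)] *)
Lemma RInt_gamma_integrand_3_2_le a b : 0 < a -> a <= b -> RInt (gamma_integrand (3 / 2)) a b <= 2.
Proof.
  intros Ha Hab.
  set (g := fun t => (1 + t) * exp (- t)). set (G := fun t => - ((2 + t) * exp (- t))).
  assert (HI : is_RInt g a b (G b - G a)).
  { apply (is_RInt_derive G g); intros t _.
    - unfold G, g. auto_derive; [easy|ring].
    - apply (@ex_derive_continuous R_AbsRing R_NormedModule). unfold g. auto_derive. easy. }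
  assert (Hle : RInt (gamma_integrand (3 / 2)) a b <= G b - G a).
  { rewrite <- (is_RInt_unique g a b _ HI).
    apply RInt_le; [easy|now apply ex_RInt_gamma_integrand|now exists (G b - G a)|].
    intros t Ht. unfold gamma_integrand, g. replace (3 / 2 - 1) with (/ 2) by field.
    rewrite Rpower_sqrt by lra. apply Rmult_le_compat_r; [left; apply exp_pos|].
    pose proof (sqrt_sqrt t ltac:(lra)). pose proof (sqrt_pos t). nra. }
  assert ((2 + a) * exp (- a) <= 2).
  { rewrite exp_Ropp. pose proof (exp_ineq1 a ltac:(lra)). pose proof (exp_pos a).
    apply Rmult_le_reg_r with (exp a); [easy|]. rewrite Rmult_assoc, Rinv_l by lra. lra. }
  pose proof (exp_pos (- b)). assert (0 <= (2 + b) * exp (- b)) by (apply Rmult_le_pos; lra).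
  unfold G in Hle. lra.
Qed.

Lemma RInt_gamma_integrand_3_2_pos : 0 < RInt (gamma_integrand (3 / 2)) 1 2.
Proof.
  assert (H : RInt (fun _ => exp (- 2)) 1 2 <= RInt (gamma_integrand (3 / 2)) 1 2).
  { apply RInt_le; [lra|apply (@ex_RInt_const R_CompleteNormedModule)|apply ex_RInt_gamma_integrand; lra|].
    intros t Ht. unfold gamma_integrand. replace (3 / 2 - 1) with (/ 2) by field.
    rewrite Rpower_sqrt, <- (Rmult_1_l (exp (- 2))) by lra.
    apply Rmult_le_compat; [lra|left; apply exp_pos| |apply exp_le_compat; lra].
    rewrite <- sqrt_1. apply sqrt_le_1_alt. lra. }
  rewrite RInt_const in H. change (scal (2 - 1) (exp (- 2))) with ((2 - 1) * exp (- 2)) in H.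
  pose proof (exp_pos (- 2)). lra.
Qed.

(* [Gamma (3/2)] is the supremum of the increasing family of integrals [RInt _ a b] *)
Lemma is_RInt_0_infty_gamma_3_2 : exists l, 0 < l /\ is_RInt_0_infty (gamma_integrand (3 / 2)) l.
Proof.
  set (E := fun y => exists a b, 0 < a <= b /\ y = RInt (gamma_integrand (3 / 2)) a b).
  assert (Hbd : bound E).
  { exists 2. intros y [a [b [Hab ->]]]. apply RInt_gamma_integrand_3_2_le; lra. }
  assert (HE : E (RInt (gamma_integrand (3 / 2)) 1 2)) by (exists 1, 2; split; [lra|easy]).
  destruct (completeness E Hbd (ex_intro _ _ HE)) as [l [Hub Hlub]].
  exists l. split; [pose proof RInt_gamma_integrand_3_2_pos; pose proof (Hub _ HE); lra|].
  split; [intros; now apply ex_RInt_gamma_integrand|]. intros eps Heps.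
  assert (Happrox : exists y, E y /\ l - eps < y).
  { apply NNPP. intros Hn. enough (l <= l - eps) by lra. apply Hlub. intros y Hy.
    destruct (Rle_lt_dec y (l - eps)); auto. exfalso. apply Hn. now exists y. }
  destruct Happrox as [y [[a' [b' [Hab' ->]]] Hy]].
  exists a', b'. split; [lra|]. intros a b Ha Hb.
  pose proof (RInt_gamma_integrand_mono (3 / 2) a a' b' b ltac:(lra) ltac:(lra) ltac:(lra) ltac:(lra)).
  assert (RInt (gamma_integrand (3 / 2)) a b <= l) by (apply Hub; exists a, b; split; [lra|easy]).
  apply Rabs_lt_between'. lra.
Qed.

Lemma Gamma_half_integer k : (1 <= k)%nat ->
  0 < Gamma (INR k + / 2) /\
  forall m, Gamma (INR m + (INR k + / 2)) = pochhammer (INR k + / 2) m * Gamma (INR k + / 2).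
Proof.
  intros Hk. destruct is_RInt_0_infty_gamma_3_2 as [l [Hl HI]].
  assert (HG : forall j, Gamma (3 / 2 + INR j) = pochhammer (3 / 2) j * l).
  { intros j. apply Gamma_is_RInt_0_infty. induction j as [|j IH]; simpl pochhammer.
    - replace (3 / 2 + INR 0) with (3 / 2) by (simpl; ring). now rewrite Rmult_1_l.
    - rewrite S_INR, <- Rplus_assoc.
      replace (pochhammer (3 / 2) j * (3 / 2 + INR j) * l) with ((3 / 2 + INR j) * (pochhammer (3 / 2) j * l))
        by ring.
      apply is_RInt_0_infty_gamma_S; [pose proof (pos_INR j); lra|easy]. }
  assert (Ek : INR k + / 2 = 3 / 2 + INR (k - 1)) by (rewrite minus_INR by lia; simpl; field).
  split.
  - rewrite Ek, HG. apply Rmult_lt_0_compat; [apply pochhammer_pos; lra|easy].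
  - intros m. replace (INR m + (INR k + / 2)) with (3 / 2 + INR (k - 1 + m)) by (rewrite plus_INR, Ek; ring).
    rewrite Ek, !HG, pochhammer_add. ring.
Qed.

(** * Bessel functions of half-integer order *)

Lemma Rpower_2m_plus y m nu : 0 < y -> Rpower y (2 * INR m + nu) = (y ^ 2) ^ m * Rpower y nu.
Proof.
  intros Hy. rewrite Rpower_plus, <- pow_mult, <- Rpower_pow by easy.
  now rewrite mult_INR.
Qed.

Lemma BesselJ_half_integer k x : (1 <= k)%nat -> 0 < x ->
  BesselJ (INR k - / 2) x =
  Rpower (x / 2) (INR k - / 2) / Gamma (INR k + / 2) * phi (INR k + / 2) ((x / 2) ^ 2).
Proof.
  intros Hk Hx. destruct (Gamma_half_integer k Hk) as [HG HGm].
  set (b := INR k + / 2) in *. assert (0 < b) by (unfold b; pose proof (pos_INR k); lra).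
  unfold BesselJ, phi, PSeries. unfold Rdiv at 1. rewrite <- Series_scal_l. apply Series_ext. intros m.
  replace (INR m + (INR k - / 2) + 1) with (INR m + b) by (unfold b; field).
  rewrite HGm, Rpower_2m_plus by lra. unfold phi_coef. change (scal ?u ?v) with (u * v).
  pose proof (INR_fact_lt_0 m). pose proof (pochhammer_pos b m ltac:(lra)).
  field. repeat split; lra.
Qed.

Lemma BesselJ_half_integer_S k x : (1 <= k)%nat -> 0 < x ->
  BesselJ (INR k - / 2 + 1) x =
  - (Rpower (x / 2) (INR k - / 2 + 1) / Gamma (INR k + / 2)) * dphi (INR k + / 2) ((x / 2) ^ 2).
Proof.
  intros Hk Hx. destruct (Gamma_half_integer k Hk) as [HG HGm].
  set (b := INR k + / 2) in *. assert (0 < b) by (unfold b; pose proof (pos_INR k); lra).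
  unfold BesselJ, dphi, PSeries. rewrite <- Series_scal_l. apply Series_ext. intros m.
  replace (INR m + (INR k - / 2 + 1) + 1) with (INR (S m) + b) by (unfold b; rewrite S_INR; field).
  rewrite HGm, Rpower_2m_plus by lra. unfold PS_derive, phi_coef. change (scal ?u ?v) with (u * v).
  rewrite fact_simpl, mult_INR. simpl pochhammer. change ((-1) ^ S m) with (-1 * (-1) ^ m).
  pose proof (INR_fact_lt_0 m). pose proof (lt_0_INR (S m) ltac:(lia)).
  pose proof (pochhammer_pos b m ltac:(lra)). pose proof (pos_INR m).
  field. repeat split; lra.
Qed.

Lemma BesselJ_half_integer_normalized k x : (1 <= k)%nat -> 0 < x ->
  Gamma (INR k + / 2) * Rpower (x / 2) (- (INR k - / 2)) * Rabs (BesselJ (INR k - / 2) x) =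
  Rabs (phi (INR k + / 2) ((x / 2) ^ 2)).
Proof.
  intros Hk Hx. destruct (Gamma_half_integer k Hk) as [HG _].
  rewrite (BesselJ_half_integer k x Hk Hx), Rabs_mult, Rpower_Ropp.
  assert (0 < Rpower (x / 2) (INR k - / 2)) by apply exp_pos.
  rewrite (Rabs_pos_eq (Rpower _ _ / _)) by (left; apply Rdiv_lt_0_compat; lra).
  field. lra.
Qed.

Lemma BesselJ_half_integer_S_first_pos_zero k s0 : (1 <= k)%nat -> 0 < s0 ->
  dphi (INR k + / 2) s0 = 0 -> (forall s, 0 <= s < s0 -> dphi (INR k + / 2) s < 0) ->
  first_pos_zero (BesselJ (INR k - / 2 + 1)) (2 * sqrt s0).
Proof.
  intros Hk Hs0 Hz Hneg. destruct (Gamma_half_integer k Hk) as [HG _].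
  pose proof (sqrt_lt_R0 s0 Hs0).
  split; [lra|split].
  - rewrite BesselJ_half_integer_S by (easy || lra).
    replace ((2 * sqrt s0 / 2) ^ 2) with s0 by (rewrite <- (pow2_sqrt s0) at 1 by lra; f_equal; field).
    rewrite Hz. ring.
  - intros x Hx. rewrite BesselJ_half_integer_S by (easy || lra).
    assert (Hx2 : 0 <= (x / 2) ^ 2 < s0).
    { split; [apply pow2_ge_0|]. rewrite <- (pow2_sqrt s0) by lra. simpl. nra. }
    pose proof (Hneg _ Hx2).
    assert (0 < Rpower (x / 2) (INR k - / 2 + 1) / Gamma (INR k + / 2))
      by (apply Rdiv_lt_0_compat; [apply exp_pos|easy]).
    intros Hc. nra.
Qed.

(** * Taylor coefficients of [T_n] at [1] *)

Fixpoint falling (x : R) (r : nat) : R :=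
  match r with O => 1 | S p => falling x p * (x - INR p) end.

Lemma falling_S_shift x r : falling (x + 1) (S r) = (x + 1) * falling x r.
Proof.
  induction r as [|r IH]; [simpl; ring|].
  change (falling (x + 1) (S (S r))) with (falling (x + 1) (S r) * (x + 1 - INR (S r))).
  rewrite IH. simpl falling. rewrite S_INR. ring.
Qed.

Lemma falling_diff x r : falling (x + 1) (S r) - falling x (S r) = INR (S r) * falling x r.
Proof. rewrite falling_S_shift. simpl falling. rewrite S_INR. ring. Qed.

Lemma falling_diff2 x r :
  falling (x + 2) (S (S r)) - 2 * falling (x + 1) (S (S r)) + falling x (S (S r)) =
  INR (S (S r)) * INR (S r) * falling x r.
Proof.
  replace (x + 2) with (x + 1 + 1) by ring.
  replace (falling (x + 1 + 1) (S (S r)) - 2 * falling (x + 1) (S (S r)) + falling x (S (S r))) with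
    ((falling (x + 1 + 1) (S (S r)) - falling (x + 1) (S (S r))) -
     (falling (x + 1) (S (S r)) - falling x (S (S r)))) by ring.
  rewrite !falling_diff, Rmult_assoc, <- Rmult_minus_distr_l, falling_diff. ring.
Qed.

Fixpoint cheb_num (m : nat) (N : R) : R :=
  match m with O => 1 | S p => cheb_num p N * (N * N - INR p * INR p) end.

Lemma cheb_num_S m N : cheb_num (S m) N = cheb_num m N * (N * N - INR m * INR m).
Proof. reflexivity. Qed.

Lemma cheb_num_falling m N : cheb_num (S m) N = N * falling (N + INR m) (S (2 * m)).
Proof.
  induction m as [|m IH]; [simpl; ring|].
  change (cheb_num (S (S m)) N) with (cheb_num (S m) N * (N * N - INR (S m) * INR (S m))).
  rewrite IH. replace (S (2 * S m)) with (S (S (S (2 * m)))) by lia.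
  replace (N + INR (S m)) with (N + INR m + 1) by (rewrite S_INR; ring).
  rewrite falling_S_shift.
  change (falling (N + INR m) (S (S (2 * m))))
    with (falling (N + INR m) (S (2 * m)) * (N + INR m - INR (S (2 * m)))).
  rewrite !S_INR, mult_INR. simpl (INR 2). ring.
Qed.

(* second differences in [N] of falling factorials are again falling factorials *)
Lemma cheb_num_falling_avg m N :
  cheb_num (S m) N = (falling (N + INR m) (S (S (2 * m))) + falling (N + INR m + 1) (S (S (2 * m)))) / 2.
Proof.
  rewrite cheb_num_falling, falling_S_shift.
  change (falling (N + INR m) (S (S (2 * m))))
    with (falling (N + INR m) (S (2 * m)) * (N + INR m - INR (S (2 * m)))).
  rewrite S_INR, mult_INR. simpl (INR 2). field.
Qed.

Lemma cheb_num_diff2 p N :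
  cheb_num (S p) (N + 2) - 2 * cheb_num (S p) (N + 1) + cheb_num (S p) N =
  2 * INR (S p) * INR (S (2 * p)) * cheb_num p (N + 1).
Proof.
  destruct p as [|m]; [simpl; ring|].
  rewrite !cheb_num_falling_avg. replace (S (S (2 * S m))) with (S (S (S (S (2 * m))))) by lia.
  set (r := S (S (2 * m))). set (X := N + INR (S m)).
  replace (N + 2 + INR (S m)) with (X + 2) by (unfold X; ring).
  replace (N + 1 + INR (S m)) with (X + 1) by (unfold X; ring).
  replace (N + INR (S m)) with X by easy. replace (X + 2 + 1) with (X + 1 + 2) by ring.
  replace (X + 1 + 1) with (X + 2) by ring.
  replace ((falling (X + 2) (S (S r)) + falling (X + 1 + 2) (S (S r))) / 2 -
      2 * ((falling (X + 1) (S (S r)) + falling (X + 2) (S (S r))) / 2) +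
      (falling X (S (S r)) + falling (X + 1) (S (S r))) / 2)
    with (((falling (X + 2) (S (S r)) - 2 * falling (X + 1) (S (S r)) + falling X (S (S r))) +
           (falling (X + 1 + 2) (S (S r)) - 2 * falling (X + 1 + 1) (S (S r)) +
            falling (X + 1) (S (S r)))) / 2)
    by (replace (X + 1 + 1) with (X + 2) by ring; field).
  rewrite !falling_diff2.
  replace (N + 1 + INR m) with X by (unfold X; rewrite S_INR; ring).
  unfold r. replace (S (2 * S m)) with (S (S (S (2 * m)))) by lia.
  rewrite !S_INR, mult_INR. simpl (INR 2). field.
Qed.

Definition cheb_coef (N : R) (m : nat) : R :=
  cheb_num m N / (pochhammer (/ 2) m * INR (fact m) * 2 ^ m).

Lemma cheb_coef_0 N : cheb_coef N 0 = 1.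
Proof. unfold cheb_coef. simpl. field. Qed.

Lemma cheb_coef_S N j :
  cheb_coef N (S j) = cheb_coef N j * ((N * N - INR j * INR j) / (2 * (/ 2 + INR j) * INR (S j))).
Proof.
  unfold cheb_coef. simpl cheb_num. simpl pochhammer. rewrite fact_simpl, mult_INR.
  pose proof (pochhammer_pos (/ 2) j ltac:(lra)). pose proof (INR_fact_lt_0 j).
  pose proof (pow_lt 2 j ltac:(lra)). pose proof (lt_0_INR (S j) ltac:(lia)). pose proof (pos_INR j).
  simpl pow. field. repeat split; lra.
Qed.

Lemma cheb_coef_rec N p :
  cheb_coef (N + 2) (S p) = 2 * cheb_coef (N + 1) (S p) + 2 * cheb_coef (N + 1) p - cheb_coef N (S p).
Proof.
  unfold cheb_coef. pose proof (cheb_num_diff2 p N).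
  replace (cheb_num (S p) (N + 2)) with
    (2 * INR (S p) * INR (S (2 * p)) * cheb_num p (N + 1) + 2 * cheb_num (S p) (N + 1) - cheb_num (S p) N)
    by lra.
  simpl pochhammer. rewrite fact_simpl, mult_INR.
  pose proof (pochhammer_pos (/ 2) p ltac:(lra)). pose proof (INR_fact_lt_0 p).
  pose proof (pow_lt 2 p ltac:(lra)). pose proof (pos_INR p).
  rewrite (S_INR (2 * p)), mult_INR, (S_INR p). simpl pow. simpl (INR 2). field.
  repeat split; lra.
Qed.

Lemma cheb_coef_zero n m : (n < m)%nat -> cheb_coef (INR n) m = 0.
Proof.
  intros H. unfold cheb_coef. replace m with (S n + (m - S n))%nat by lia.
  enough (Hz : forall j, cheb_num (S n + j) (INR n) = 0) by (rewrite Hz; unfold Rdiv; ring).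
  induction j as [|j IH]; [rewrite Nat.add_0_r, cheb_num_S; ring|].
  rewrite Nat.add_succ_r, cheb_num_S, IH. ring.
Qed.

Lemma CV_radius_cheb_coef n : CV_radius (cheb_coef (INR n)) = p_infty.
Proof. apply (CV_radius_finite_support _ n). intros; now apply cheb_coef_zero. Qed.

Lemma ChebT_SS n x : ChebT (S (S n)) x = 2 * x * ChebT (S n) x - ChebT n x.
Proof. unfold ChebT. simpl cheb_pair. now destruct (cheb_pair n x). Qed.

Lemma PSeries_cheb_coef_SS n y :
  PSeries (cheb_coef (INR (S (S n)))) y =
  2 * (1 + y) * PSeries (cheb_coef (INR (S n))) y - PSeries (cheb_coef (INR n)) y.
Proof.
  pose proof (CV_radius_cheb_coef (S n)) as R1.
  transitivity (PSeries (PS_plus (PS_plus (PS_scal 2 (cheb_coef (INR (S n))))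
    (PS_scal 2 (PS_incr_1 (cheb_coef (INR (S n)))))) (PS_scal (-1) (cheb_coef (INR n)))) y).
  - apply PSeries_ext. intros m.
    change (PS_plus (PS_plus (PS_scal 2 ?a) (PS_scal 2 (PS_incr_1 ?a))) (PS_scal (-1) ?c) m)
      with (2 * a m + 2 * match m with O => 0 | S p => a p end + -1 * c m).
    destruct m as [|p].
    + rewrite !cheb_coef_0. ring.
    + replace (INR (S (S n))) with (INR n + 2) by (rewrite !S_INR; ring).
      replace (INR (S n)) with (INR n + 1) by (rewrite S_INR; ring).
      rewrite cheb_coef_rec. ring.
  - pose proof (CV_radius_cheb_coef n) as R0.
    rewrite !PSeries_plus, !PSeries_scal, PSeries_incr_1; [ring| | | |].
    + apply ex_pseries_CV_radius_infty. rewrite CV_radius_scal; [easy|lra].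
    + apply ex_pseries_CV_radius_infty. rewrite CV_radius_scal, CV_radius_incr_1; [easy|lra].
    + apply CV_radius_inside. eapply Rbar_lt_le_trans; [|apply CV_radius_plus].
      rewrite !CV_radius_scal, CV_radius_incr_1, R1 by lra. easy.
    + apply ex_pseries_CV_radius_infty. rewrite CV_radius_scal; [easy|lra].
Qed.

Lemma ChebT_PSeries n x : ChebT n x = PSeries (cheb_coef (INR n)) (x - 1).
Proof.
  revert x. enough (H : forall x, ChebT n x = PSeries (cheb_coef (INR n)) (x - 1) /\
                               ChebT (S n) x = PSeries (cheb_coef (INR (S n))) (x - 1))
    by (intros x; apply H).
  induction n as [|n IH]; intros x.
  - rewrite (PSeries_finite_support _ 0), (PSeries_finite_support _ 1)
      by (intros; now apply cheb_coef_zero).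
    unfold cheb_coef, ChebT. simpl. split; field.
  - destruct (IH x) as [H0 H1]. split; [easy|].
    rewrite ChebT_SS, H0, H1, PSeries_cheb_coef_SS. f_equal. ring.
Qed.

(** * Derivatives of [T_n] in the scaled variable [s = n^2 (1 - x) / 2] *)

Fixpoint cheb_deriv_coef (k n m : nat) : R :=
  match m with
  | O => 1
  | S p => cheb_deriv_coef k n p * (((INR k + INR p) * (INR k + INR p) - INR n * INR n) / (INR n * INR n))
           / ((INR k + / 2 + INR p) * INR (S p))
  end.

Lemma cheb_deriv_coef_S k n p : cheb_deriv_coef k n (S p) =
  cheb_deriv_coef k n p * (((INR k + INR p) * (INR k + INR p) - INR n * INR n) / (INR n * INR n))
  / ((INR k + / 2 + INR p) * INR (S p)).
Proof. reflexivity. Qed.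

Definition cheb_deriv_1 (k n : nat) : R := INR (fact k) * cheb_coef (INR n) k.

Definition cheb_scale (n : nat) (x : R) : R := (1 - x) * (INR n * INR n) / 2.

Lemma PS_derive_n_cheb_coef k n m : (1 <= n)%nat ->
  PS_derive_n k (cheb_coef (INR n)) m * (- 2 / (INR n * INR n)) ^ m =
  cheb_deriv_1 k n * cheb_deriv_coef k n m.
Proof.
  intros Hn. pose proof (lt_0_INR n ltac:(lia)).
  induction m as [|m IH]; [unfold PS_derive_n, cheb_deriv_1; simpl; field|].
  transitivity (cheb_deriv_1 k n * cheb_deriv_coef k n m *
    (((INR k + INR m) * (INR k + INR m) - INR n * INR n) / (INR n * INR n))
    / ((INR k + / 2 + INR m) * INR (S m))); [|rewrite cheb_deriv_coef_S; unfold Rdiv; ring].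
  rewrite <- IH. unfold PS_derive_n. replace (S m + k)%nat with (S (m + k)) by lia.
  rewrite !fact_simpl, !mult_INR, cheb_coef_S.
  pose proof (INR_fact_lt_0 m). pose proof (INR_fact_lt_0 (m + k)).
  pose proof (pos_INR m). pose proof (pos_INR k).
  rewrite !S_INR, plus_INR. simpl pow. field. repeat split; lra.
Qed.

Lemma Derive_n_ChebT j n x :
  Derive_n (ChebT n) j x = PSeries (PS_derive_n j (cheb_coef (INR n))) (x - 1).
Proof.
  rewrite (Derive_n_ext (ChebT n) (fun y => PSeries (cheb_coef (INR n)) (y + -1)))
    by (intros; apply ChebT_PSeries).
  rewrite (Derive_n_comp_trans (PSeries (cheb_coef (INR n)))), Derive_n_PSeries
    by now rewrite CV_radius_cheb_coef.
  reflexivity.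
Qed.

Lemma Derive_n_ChebT_scaled k n x : (1 <= n)%nat ->
  Derive_n (ChebT n) k x = cheb_deriv_1 k n * PSeries (cheb_deriv_coef k n) (cheb_scale n x).
Proof.
  intros Hn. pose proof (lt_0_INR n ltac:(lia)).
  rewrite Derive_n_ChebT. unfold PSeries. rewrite <- Series_scal_l. apply Series_ext. intros m.
  replace (x - 1) with (- 2 / (INR n * INR n) * cheb_scale n x) by (unfold cheb_scale; field; lra).
  rewrite Rpow_mult_distr, <- Rmult_assoc, (PS_derive_n_cheb_coef k n m Hn). ring.
Qed.

Lemma Derive_n_S_ChebT_scaled k n x : (1 <= n)%nat ->
  Derive_n (ChebT n) (S k) x =
  cheb_deriv_1 k n * (- (INR n * INR n) / 2) * PSeries (PS_derive (cheb_deriv_coef k n)) (cheb_scale n x).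
Proof.
  intros Hn. pose proof (lt_0_INR n ltac:(lia)).
  rewrite Derive_n_ChebT. unfold PSeries. rewrite <- Series_scal_l. apply Series_ext. intros m.
  replace (x - 1) with (- 2 / (INR n * INR n) * cheb_scale n x) by (unfold cheb_scale; field; lra).
  assert (Ek : PS_derive_n (S k) (cheb_coef (INR n)) m =
                INR (S m) * PS_derive_n k (cheb_coef (INR n)) (S m)).
  { unfold PS_derive_n. replace (m + S k)%nat with (S m + k)%nat by lia.
    rewrite fact_simpl, mult_INR. pose proof (INR_fact_lt_0 m). pose proof (lt_0_INR (S m) ltac:(lia)).
    field. lra. }
  pose proof (PS_derive_n_cheb_coef k n (S m) Hn) as E.
  unfold PS_derive. rewrite Ek, Rpow_mult_distr.
  replace (cheb_deriv_1 k n * (- (INR n * INR n) / 2) *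
           (INR (S m) * cheb_deriv_coef k n (S m) * cheb_scale n x ^ m))
    with (- (INR n * INR n) / 2 * INR (S m) * cheb_scale n x ^ m *
          (cheb_deriv_1 k n * cheb_deriv_coef k n (S m))) by ring.
  rewrite <- E. simpl pow. field. lra.
Qed.

Lemma cheb_deriv_coef_zero k n m : (k <= n)%nat -> (n - k < m)%nat -> cheb_deriv_coef k n m = 0.
Proof.
  intros Hkn Hm. replace m with (S (n - k) + (m - S (n - k)))%nat by lia.
  induction (m - S (n - k))%nat as [|j IH].
  - rewrite Nat.add_0_r, cheb_deriv_coef_S.
    replace (INR k + INR (n - k)) with (INR n) by (rewrite minus_INR by lia; ring). unfold Rdiv. ring.
  - rewrite Nat.add_succ_r, cheb_deriv_coef_S, IH. unfold Rdiv. ring.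
Qed.

Lemma CV_radius_cheb_deriv_coef k n : (k <= n)%nat -> CV_radius (cheb_deriv_coef k n) = p_infty.
Proof. intros H. apply (CV_radius_finite_support _ (n - k)). intros. now apply cheb_deriv_coef_zero. Qed.

Lemma cheb_deriv_ratio_bounds k n m : (k + m <= n)%nat -> (1 <= n)%nat ->
  -1 <= ((INR k + INR m) * (INR k + INR m) - INR n * INR n) / (INR n * INR n) <= 0.
Proof.
  intros H Hn. pose proof (lt_0_INR n ltac:(lia)).
  assert (INR k + INR m <= INR n) by (rewrite <- plus_INR; apply le_INR; lia).
  pose proof (pos_INR k). pose proof (pos_INR m). assert (0 < INR n * INR n) by nra.
  split; apply Rmult_le_reg_r with (INR n * INR n); auto; unfold Rdiv;
    rewrite Rmult_assoc, Rinv_l by lra; nra.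
Qed.

Section ChebDerivCoef.

Variables k n : nat.
Hypothesis k_le_n : (k <= n)%nat.
Hypothesis n_pos : (1 <= n)%nat.

Lemma cheb_deriv_coef_alternating m : 0 <= (-1) ^ m * cheb_deriv_coef k n m.
Proof.
  induction m as [|m IH]; [simpl; lra|].
  destruct (le_lt_dec (k + m) n) as [Hle|Hgt].
  - rewrite cheb_deriv_coef_S. pose proof (cheb_deriv_ratio_bounds k n m Hle n_pos).
    pose proof (pos_INR k). pose proof (pos_INR m). pose proof (lt_0_INR (S m) ltac:(lia)).
    set (f := ((INR k + INR m) * (INR k + INR m) - INR n * INR n) / (INR n * INR n)) in *.
    replace ((-1) ^ S m * (cheb_deriv_coef k n m * f / ((INR k + / 2 + INR m) * INR (S m)))) with
      (((-1) ^ m * cheb_deriv_coef k n m) * (- f) / ((INR k + / 2 + INR m) * INR (S m)))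
      by (simpl pow; field; lra).
    apply Rdiv_le_0_compat; [apply Rmult_le_pos; lra|nra].
  - rewrite (cheb_deriv_coef_zero k n (S m)) by lia. lra.
Qed.

Lemma cheb_deriv_coef_le_phi_coef m : Rabs (cheb_deriv_coef k n m) <= Rabs (phi_coef (INR k + / 2) m).
Proof.
  pose proof (pos_INR k). induction m as [|m IH]; [right; unfold phi_coef; simpl; f_equal; field|].
  destruct (le_lt_dec (k + m) n) as [Hle|Hgt].
  - rewrite cheb_deriv_coef_S, phi_coef_S by lra. pose proof (cheb_deriv_ratio_bounds k n m Hle n_pos).
    pose proof (pos_INR m). pose proof (lt_0_INR (S m) ltac:(lia)).
    assert (Hd : 0 < (INR k + / 2 + INR m) * INR (S m)) by nra.
    set (f := ((INR k + INR m) * (INR k + INR m) - INR n * INR n) / (INR n * INR n)) in *.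
    unfold Rdiv. rewrite !Rabs_mult, Rabs_Ropp, Rabs_inv, (Rabs_pos_eq (_ * INR (S m))) by lra.
    assert (Rabs f <= 1) by (apply Rabs_le; lra).
    pose proof (Rinv_0_lt_compat _ Hd). pose proof (Rabs_pos (cheb_deriv_coef k n m)).
    pose proof (Rabs_pos f).
    apply Rmult_le_compat_r; [lra|]. nra.
  - rewrite (cheb_deriv_coef_zero k n (S m)) by lia. rewrite Rabs_R0. apply Rabs_pos.
Qed.

Lemma cheb_deriv_1_pos : 0 < cheb_deriv_1 k n.
Proof.
  unfold cheb_deriv_1, cheb_coef. apply Rmult_lt_0_compat; [apply INR_fact_lt_0|].
  pose proof (pochhammer_pos (/ 2) k ltac:(lra)). pose proof (INR_fact_lt_0 k).
  pose proof (pow_lt 2 k ltac:(lra)).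
  apply Rdiv_lt_0_compat; [|apply Rmult_lt_0_compat; [apply Rmult_lt_0_compat|]; lra].
  clear -k_le_n. induction k as [|j IH]; [simpl; lra|].
  rewrite cheb_num_S. assert (INR j < INR n) by (apply lt_INR; lia). pose proof (pos_INR j).
  apply Rmult_lt_0_compat; [apply IH; lia|nra].
Qed.

End ChebDerivCoef.

Lemma is_lim_seq_cheb_deriv_coef k m :
  is_lim_seq (fun n => cheb_deriv_coef k n m) (phi_coef (INR k + / 2) m).
Proof.
  pose proof (pos_INR k). induction m as [|m IH].
  { replace (phi_coef (INR k + / 2) 0) with 1 by (unfold phi_coef; simpl; field). apply is_lim_seq_const. }
  rewrite phi_coef_S by lra. pose proof (pos_INR m). pose proof (lt_0_INR (S m) ltac:(lia)).
  apply (is_lim_seq_ext_loc (fun n => cheb_deriv_coef k n m *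
    ((INR k + INR m) * (INR k + INR m) * (/ INR n * / INR n) - 1) * / ((INR k + / 2 + INR m) * INR (S m)))).
  - exists 1%nat. intros n Hn. pose proof (lt_0_INR n ltac:(lia)).
    rewrite cheb_deriv_coef_S. field. repeat split; lra.
  - assert (Hinv : is_lim_seq (fun n => / INR n) 0).
    { apply is_lim_seq_incr_1, (is_lim_seq_inv (fun n => INR (S n)) p_infty); [|discriminate].
      apply (is_lim_seq_incr_1 INR), is_lim_seq_INR. }
    replace (- phi_coef (INR k + / 2) m / ((INR k + / 2 + INR m) * INR (S m))) with
      (phi_coef (INR k + / 2) m * ((INR k + INR m) * (INR k + INR m) * (0 * 0) - 1) *
       / ((INR k + / 2 + INR m) * INR (S m))) by (field; lra).
    apply is_lim_seq_mult'; [apply is_lim_seq_mult'; [easy|]|apply is_lim_seq_const].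
    apply is_lim_seq_minus'; [|apply is_lim_seq_const].
    apply is_lim_seq_mult'; [apply is_lim_seq_const|]. now apply is_lim_seq_mult'.
Qed.

(* all coefficients of the derivative series have the sign of [(-1)^(m+1)], and the constant one
   is nonzero *)
Lemma PSeries_derive_cheb_deriv_coef_neg k n s : (k < n)%nat -> s <= 0 ->
  PSeries (PS_derive (cheb_deriv_coef k n)) s < 0.
Proof.
  intros Hkn Hs. pose proof (lt_0_INR n ltac:(lia)).
  assert (Hex : ex_series (fun m => PS_derive (cheb_deriv_coef k n) m * s ^ m)).
  { apply ex_pseries_ex_series, ex_pseries_CV_radius_infty.
    rewrite CV_radius_derive. apply CV_radius_cheb_deriv_coef. lia. }
  assert (Hterm : forall m, PS_derive (cheb_deriv_coef k n) m * s ^ m <= 0).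
  { intros m. unfold PS_derive. pose proof (cheb_deriv_coef_alternating k n ltac:(lia) ltac:(lia) (S m)).
    replace s with (-1 * Rabs s) by (rewrite Rabs_left1 by easy; ring).
    rewrite Rpow_mult_distr. pose proof (pos_INR (S m)). pose proof (pow_le (Rabs s) m (Rabs_pos s)).
    replace (INR (S m) * cheb_deriv_coef k n (S m) * ((-1) ^ m * Rabs s ^ m)) with
      (- (INR (S m) * ((-1) ^ S m * cheb_deriv_coef k n (S m)) * Rabs s ^ m)) by (simpl; ring).
    enough (0 <= INR (S m) * ((-1) ^ S m * cheb_deriv_coef k n (S m)) * Rabs s ^ m) by lra.
    apply Rmult_le_pos; [apply Rmult_le_pos|]; lra. }
  assert (Hrest : Series (fun m => PS_derive (cheb_deriv_coef k n) (S m) * s ^ S m) <= 0).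
  { apply Series_nonpos; [|intros; apply Hterm].
    now apply (ex_series_incr_1 (fun m => PS_derive (cheb_deriv_coef k n) m * s ^ m)). }
  assert (H0 : PS_derive (cheb_deriv_coef k n) 0 < 0).
  { unfold PS_derive. rewrite cheb_deriv_coef_S. simpl cheb_deriv_coef.
    assert (INR k < INR n) by (apply lt_INR; lia). pose proof (pos_INR k).
    replace (INR (S 0)) with 1 by (simpl; ring). replace (INR 0) with 0 by (simpl; ring).
    assert (((INR k + 0) * (INR k + 0) - INR n * INR n) / (INR n * INR n) < 0)
      by (apply Rdiv_neg_pos; nra).
    assert (0 < / ((INR k + / 2 + 0) * 1)) by (apply Rinv_0_lt_compat; lra).
    unfold Rdiv in *. nra. }
  unfold PSeries. rewrite Series_incr_1, pow_O by easy. lra.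
Qed.

(** * Convergence of [tau_(n,k)] *)

Lemma cheb_deriv_series_unif k r : 0 <= r -> forall eps, 0 < eps ->
  exists N, forall n, (N <= n)%nat -> forall s, Rabs s <= r ->
    Rabs (PSeries (cheb_deriv_coef k n) s - phi (INR k + / 2) s) <= eps /\
    Rabs (PSeries (PS_derive (cheb_deriv_coef k n)) s - dphi (INR k + / 2) s) <= eps.
Proof.
  intros Hr eps Heps. set (b := INR k + / 2). assert (Hb : 0 < b) by (unfold b; pose proof (pos_INR k); lra).
  assert (Hdom : forall a, CV_radius a = p_infty -> ex_series (fun m => Rabs (a m) * r ^ m)).
  { intros a Ha. apply (ex_series_ext (fun m => Rabs (a m * r ^ m))).
    - intros m. rewrite Rabs_mult, (Rabs_pos_eq (r ^ m)); [easy|now apply pow_le].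
    - apply CV_disk_inside. now rewrite Ha. }
  (* shifting [n] by [k + 1] ensures [k < n], hence [1 <= n] *)
  destruct (PSeries_tannery (fun n m => cheb_deriv_coef k (n + S k) m) (phi_coef b)
    (fun m => Rabs (phi_coef b m)) r Hr) with (eps := eps) as [N1 HN1]; auto.
  { intros m. apply (is_lim_seq_incr_n (fun n => cheb_deriv_coef k n m)), is_lim_seq_cheb_deriv_coef. }
  { intros n m. apply cheb_deriv_coef_le_phi_coef; lia. }
  { apply Hdom, CV_radius_phi_coef, Hb. }
  destruct (PSeries_tannery (fun n m => PS_derive (cheb_deriv_coef k (n + S k)) m) (PS_derive (phi_coef b))
    (fun m => Rabs (PS_derive (phi_coef b) m)) r Hr) with (eps := eps) as [N2 HN2]; auto.
  { intros m. unfold PS_derive. apply (is_lim_seq_scal_l _ (INR (S m)) (phi_coef b (S m))).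
    apply (is_lim_seq_incr_n (fun n => cheb_deriv_coef k n (S m))), is_lim_seq_cheb_deriv_coef. }
  { intros n m. unfold PS_derive. rewrite !Rabs_mult.
    apply Rmult_le_compat_l; [apply Rabs_pos|apply cheb_deriv_coef_le_phi_coef; lia]. }
  { apply Hdom. rewrite CV_radius_derive. apply CV_radius_phi_coef, Hb. }
  exists (Nat.max N1 N2 + S k)%nat. intros n Hn s Hs.
  replace n with ((n - S k) + S k)%nat by lia.
  split; [apply HN1|apply HN2]; auto; lia.
Qed.

Lemma cheb_deriv_S_root_iff k n x : (1 <= n)%nat -> (k <= n)%nat ->
  Derive_n (ChebT n) (S k) x = 0 <-> PSeries (PS_derive (cheb_deriv_coef k n)) (cheb_scale n x) = 0.
Proof.
  intros Hn Hkn. rewrite Derive_n_S_ChebT_scaled by easy.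
  pose proof (cheb_deriv_1_pos k n Hkn). pose proof (lt_0_INR n ltac:(lia)).
  assert (cheb_deriv_1 k n * (- (INR n * INR n) / 2) <> 0)
    by (apply Rmult_integral_contrapositive; split; nra).
  split; [intros Hz; now apply Rmult_integral in Hz as [|]|intros ->; ring].
Qed.

Lemma cheb_tau_scaled k n : (1 <= n)%nat -> (k <= n)%nat ->
  cheb_tau n k = Rabs (PSeries (cheb_deriv_coef k n) (cheb_scale n (cheb_omega n k))).
Proof.
  intros Hn Hkn. unfold cheb_tau. rewrite !Derive_n_ChebT_scaled by easy.
  replace (cheb_scale n 1) with 0 by (unfold cheb_scale; field).
  rewrite PSeries_0, Rabs_mult. simpl cheb_deriv_coef.
  pose proof (cheb_deriv_1_pos k n Hkn). rewrite Rabs_pos_eq by lra. field. lra.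
Qed.

Lemma Lub_Rbar_between (Z : R -> Prop) xz xb : Z xz -> (forall x, Z x -> x <= xb) ->
  exists w, Lub_Rbar Z = Finite w /\ xz <= w <= xb.
Proof.
  intros Hz Hub. destruct (Lub_Rbar_correct Z) as [HL1 HL2].
  specialize (HL1 xz Hz). specialize (HL2 xb Hub).
  destruct (Lub_Rbar Z) as [w| |]; simpl in HL1, HL2; try easy. now exists w.
Qed.

Lemma cheb_scale_inv n s : (1 <= n)%nat -> cheb_scale n (1 - 2 * s / (INR n * INR n)) = s.
Proof. intros Hn. pose proof (lt_0_INR n ltac:(lia)). unfold cheb_scale. field. lra. Qed.

Lemma cheb_scale_decreasing n x y : (1 <= n)%nat -> x < y -> cheb_scale n y < cheb_scale n x.
Proof.
  intros Hn Hxy. pose proof (lt_0_INR n ltac:(lia)). unfold cheb_scale.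
  apply Rmult_lt_compat_r; [lra|]. apply Rmult_lt_compat_r; nra.
Qed.

(* the largest root of [T_n^(k+1)] is the smallest root of the scaled derivative series *)
Lemma cheb_omega_scaled_between k n lo hi : (1 <= n)%nat -> (k <= n)%nat ->
  (forall s, s <= lo -> PSeries (PS_derive (cheb_deriv_coef k n)) s < 0) ->
  0 < PSeries (PS_derive (cheb_deriv_coef k n)) hi ->
  lo <= cheb_scale n (cheb_omega n k) <= hi.
Proof.
  intros Hn Hkn Hlo Hhi. set (G := PSeries (PS_derive (cheb_deriv_coef k n))).
  assert (HG : continuity G).
  { intros x. apply PSeries_continuity. rewrite CV_radius_derive, CV_radius_cheb_deriv_coef by easy. easy. }
  assert (Hlohi : lo < hi) by (apply Rnot_le_lt; intros Hle; specialize (Hlo hi Hle); unfold G in *; lra).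
  destruct (IVT G lo hi HG Hlohi (Hlo lo (Rle_refl _)) Hhi) as [z [Hz Gz]].
  set (xz := 1 - 2 * z / (INR n * INR n)). set (xb := 1 - 2 * lo / (INR n * INR n)).
  destruct (Lub_Rbar_between (fun x => Derive_n (ChebT n) (S k) x = 0) xz xb) as [w [Hw Hwb]].
  - apply cheb_deriv_S_root_iff; [easy|easy|]. unfold xz. now rewrite cheb_scale_inv.
  - intros x Hx%cheb_deriv_S_root_iff; [|easy|easy]. apply Rnot_lt_le. intros Hlt.
    apply (cheb_scale_decreasing n) in Hlt; [|easy]. unfold xb in Hlt. rewrite cheb_scale_inv in Hlt by easy.
    specialize (Hlo _ (Rlt_le _ _ Hlt)). unfold G in *. lra.
  - unfold cheb_omega. rewrite Hw. simpl.
    assert (cheb_scale n xb <= cheb_scale n w).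
    { destruct (Rle_lt_or_eq_dec w xb (proj2 Hwb)) as [Hlt|Heq];
        [left; now apply cheb_scale_decreasing|rewrite Heq; lra]. }
    assert (cheb_scale n w <= cheb_scale n xz).
    { destruct (Rle_lt_or_eq_dec xz w (proj1 Hwb)) as [Hlt|Heq];
        [left; now apply cheb_scale_decreasing|rewrite Heq; lra]. }
    unfold xb, xz in *. rewrite !cheb_scale_inv in * by easy. lra.
Qed.

Section TauLimit.

Variable k : nat.

Let b := INR k + / 2.

Variables s0 d0 : R.
Hypothesis s0_pos : 0 < s0.
Hypothesis dphi_neg_before : forall s, 0 <= s < s0 -> dphi b s < 0.
Hypothesis d0_pos : 0 < d0.
Hypothesis dphi_pos_after : forall s, s0 < s <= s0 + d0 -> 0 < dphi b s.

Lemma cheb_omega_scaled_near dl : 0 < dl -> dl <= d0 -> dl <= s0 / 2 ->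
  exists N, forall n, (N <= n)%nat -> s0 - dl <= cheb_scale n (cheb_omega n k) <= s0 + dl.
Proof.
  intros Hdl Hdl0 Hdls.
  assert (Hb : 0 < b) by (unfold b; pose proof (pos_INR k); lra).
  destruct (continuity_ab_maj (dphi b) 0 (s0 - dl) ltac:(lra) (fun c _ => continuity_dphi b Hb c))
    as [xM [HxM HxM0]].
  set (m0 := - dphi b xM). assert (0 < m0) by (unfold m0; pose proof (dphi_neg_before xM ltac:(lra)); lra).
  assert (Hhi : 0 < dphi b (s0 + dl)) by (apply dphi_pos_after; lra).
  set (e := Rmin (m0 / 2) (dphi b (s0 + dl) / 2)).
  assert (He : 0 < e) by (apply Rmin_glb_lt; lra).
  assert (e <= m0 / 2) by apply Rmin_l. assert (e <= dphi b (s0 + dl) / 2) by apply Rmin_r.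
  destruct (cheb_deriv_series_unif k (s0 + dl) ltac:(lra) e He) as [N HN].
  exists (Nat.max N (S k)). intros n Hn.
  apply cheb_omega_scaled_between; [lia|lia| |].
  - intros s Hs. destruct (Rle_lt_dec s 0); [apply PSeries_derive_cheb_deriv_coef_neg; [lia|easy]|].
    destruct (HN n ltac:(lia) s ltac:(apply Rabs_le; lra)) as [_ Hd].
    specialize (HxM s ltac:(lra)). apply Rabs_le_between' in Hd. fold b in Hd. unfold m0 in *. lra.
  - destruct (HN n ltac:(lia) (s0 + dl) ltac:(apply Rabs_le; lra)) as [_ Hd].
    apply Rabs_le_between' in Hd. fold b in Hd. lra.
Qed.

Lemma cheb_tau_near eps : 0 < eps ->
  exists N, forall n, (N <= n)%nat -> Rabs (cheb_tau n k - Rabs (phi b s0)) < eps.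
Proof.
  intros Heps. assert (Hb : 0 < b) by (unfold b; pose proof (pos_INR k); lra).
  destruct (continuity_pt_ball (phi b) s0 (continuity_phi b Hb s0) (eps / 2)) as [d1 [Hd1 Hc]]; [lra|].
  set (dl := Rmin (d1 / 2) (Rmin d0 (s0 / 2))).
  assert (Hdl : 0 < dl) by (repeat apply Rmin_glb_lt; lra).
  assert (Hdl1 : dl <= d1 / 2) by apply Rmin_l.
  assert (Hdl2 : dl <= d0) by (eapply Rle_trans; [apply Rmin_r|apply Rmin_l]).
  assert (Hdl3 : dl <= s0 / 2) by (eapply Rle_trans; [apply Rmin_r|apply Rmin_r]).
  destruct (cheb_omega_scaled_near dl Hdl Hdl2 Hdl3) as [N1 HN1].
  destruct (cheb_deriv_series_unif k (2 * s0) ltac:(lra) (eps / 2) ltac:(lra)) as [N2 HN2].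
  exists (Nat.max (Nat.max N1 N2) (S k)). intros n Hn.
  rewrite cheb_tau_scaled by lia. set (sw := cheb_scale n (cheb_omega n k)).
  specialize (HN1 n ltac:(lia)). fold sw in HN1.
  destruct (HN2 n ltac:(lia) sw ltac:(apply Rabs_le; lra)) as [Happrox _].
  specialize (Hc sw ltac:(apply Rabs_lt_between'; lra)).
  eapply Rle_lt_trans; [apply Rabs_triang_inv2|].
  replace (PSeries (cheb_deriv_coef k n) sw - phi b s0) with
    ((PSeries (cheb_deriv_coef k n) sw - phi b sw) + (phi b sw - phi b s0)) by ring.
  eapply Rle_lt_trans; [apply Rabs_triang|]. fold b in Happrox. lra.
Qed.

End TauLimit.

Theorem lemma6p1 (k : nat) (hk : (1 <= k)%nat) :
  let nu := INR k - / 2 in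
  exists j : R,
    first_pos_zero (BesselJ (nu + 1)) j /\
    is_lim_seq (fun n => cheb_tau n k)
      (Finite (Gamma (nu + 1) * Rpower (j / 2) (- nu) * Rabs (BesselJ nu j))).
Proof.
  intros nu. assert (Hb : 0 < INR k + / 2) by (pose proof (pos_INR k); lra).
  destruct (dphi_first_pos_root k hk) as [s0 [Hs0 [Hz Hneg]]].
  pose proof (phi_at_first_pos_root_neg k hk s0 Hs0 Hz Hneg) as Hphi.
  destruct (dphi_pos_right_of_root _ Hb s0 Hs0 Hz Hphi) as [d0 [Hd0 Hpos]].
  pose proof (sqrt_lt_R0 s0 Hs0).
  exists (2 * sqrt s0). split; [now apply BesselJ_half_integer_S_first_pos_zero|].
  replace (nu + 1) with (INR k + / 2) by (unfold nu; field).
  rewrite BesselJ_half_integer_normalized by (easy || lra).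
  replace ((2 * sqrt s0 / 2) ^ 2) with s0 by (rewrite <- (pow2_sqrt s0) at 1 by lra; f_equal; field).
  apply is_lim_seq_spec. intros eps.
  exact (cheb_tau_near k s0 d0 Hs0 Hneg Hd0 Hpos eps (cond_pos eps)).
Qed.
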